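(* Let $\Sigma$ be an alphabet with $|\Sigma|\ge 3$ and $f\colon\Sigma^*\to\Sigma^*$ RCP. If $f(a)\in a\Sigma^*$ for every letter $a\in\Sigma$, then $f(x)\in x\Sigma^*$ for every word $x\in\Sigma^*$.
   Context: $\Sigma^*$ is the free monoid over $\Sigma$ (finite words, concatenation, empty word $\varepsilon$). For a word $w$, $w\Sigma^*$ denotes the set of words having $w$ as a prefix. A function $f\colon(\Sigma^* )^k\to\Sigma^*$ is RCP if for every monoid morphism $\varphi\colon\Sigma^*\to\Sigma^*$ and all $u_1,\ldots,u_k,v_1,\ldots,v_k$ with $\varphi(u_i)=\varphi(v_i)$ for all $i$, we have $\varphi(f(u_1,\ldots,u_k))=\varphi(f(v_1,\ldots,v_k))$. *)

From mathcomp Require Import all_boot.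
Set Implicit Arguments. Unset Strict Implicit. Unset Printing Implicit Defensive.

(* Words over an alphabet Sigma (a finite type) are seq Sigma; concatenation is ++,
   the empty word is [::]. *)

Definition monoid_morphism (Sigma : Type) (phi : seq Sigma -> seq Sigma) : Prop :=
  phi [::] = [::] /\ forall u v, phi (u ++ v) = phi u ++ phi v.

(* RCP for a unary function f : Sigma^* -> Sigma^* (k = 1). *)
Definition RCP1 (Sigma : Type) (f : seq Sigma -> seq Sigma) : Prop :=
  forall phi : seq Sigma -> seq Sigma, monoid_morphism phi ->
    forall u v, phi u = phi v -> phi (f u) = phi (f v).

Definition has_prefix (Sigma : Type) (x w : seq Sigma) : Prop :=
  exists z, w = x ++ z.

(* If [phi u = phi v] for a morphism [phi] and [v] is a prefix of [f v], then RCP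
   gives [phi (f u) = phi (f v)], so [phi v] is a prefix of [phi (f u)].  With
   [phi] the substitution of a letter [a] by a word [y] that fixes the letters of
   [y], the hypothesis on [f [:: a]] makes [y] a prefix of the image of [f y].
   Two such substitutions by [d^n], of two letters other than [d], force [f d^n]
   to start with [d^n]; a letter outside [{d, e}], together with the collapse of
   [e] onto [d], then does the same for every word [y] over [{d, e}].  Finally [x]
   is a prefix of [f x] because its projection onto each pair of letters is a
   prefix of that of [f x], and [size x <= size (f x)] by the constant morphism. *)
From Pilot Require Import Defs.
From mathcomp Require Import all_boot.
Set Implicit Arguments. Unset Strict Implicit. Unset Printing Implicit Defensive.

Lemma has_prefixP (S : eqType) (x w : seq S) : reflect (has_prefix x w) (prefix x w).
Proof. exact: prefixP. Qed.

Definition hom_of (S : Type) (g : S -> seq S) (w : seq S) : seq S := flatten (map g w).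

Section Words.
Variable S : eqType.
Implicit Types (g : S -> seq S) (c d e : S) (w y : seq S).

Lemma hom_of_cons g c w : hom_of g (c :: w) = g c ++ hom_of g w.
Proof. by []. Qed.

Lemma hom_of_morphism g : Defs.monoid_morphism (hom_of g).
Proof. by split=> // u v; rewrite /hom_of map_cat flatten_cat. Qed.

Lemma map_morphism (h : S -> S) : Defs.monoid_morphism (map h).
Proof. by split=> // u v; rewrite map_cat. Qed.

Lemma filter_morphism (p : pred S) : Defs.monoid_morphism (filter p).
Proof. by split=> // u v; rewrite filter_cat. Qed.

Lemma hom_of_id_in g w : {in w, forall c, g c = [:: c]} -> hom_of g w = w.
Proof.
elim: w => //= c w IHw g_id; rewrite hom_of_cons g_id ?mem_head // IHw // => c' c'w.
by apply: g_id; rewrite inE c'w orbT.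
Qed.

(* A letter [c != d] fixed by [g1] or by [g2] would show up at its position in the
   corresponding image, which must read [d] there. *)
Lemma prefix_nseq_of_homs d g1 g2 n w :
  g1 d = [:: d] -> g2 d = [:: d] ->
  (forall c, c != d -> g1 c = [:: c] \/ g2 c = [:: c]) ->
  prefix (nseq n d) (hom_of g1 w) -> prefix (nseq n d) (hom_of g2 w) ->
  prefix (nseq n d) w.
Proof.
move=> g1d g2d g12_id; elim: n w => [|n IHn] [|c w] //=; rewrite !hom_of_cons.
have [-> | c_d] := eqVneq c d.
  by rewrite g1d g2d /= eqxx /=; apply: IHn.
have d_c : (d == c) = false by rewrite eq_sym (negbTE c_d).
by case: (g12_id c c_d) => ->; rewrite /= d_c // andbF.
Qed.

Lemma prefix_of_hom_collapse d e g y w :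
  g d = [:: d] -> g e = [:: e] -> {subset y <= [:: d; e]} ->
  prefix y (hom_of g w) ->
  prefix (nseq (size y) d) [seq if c == e then d else c | c <- w] ->
  prefix y w.
Proof.
move=> gd ge; elim: y w => [|c y IHy] [|c' w] y_de //=; rewrite hom_of_cons.
have [c'_de | c'_out] := boolP (c' \in [:: d; e]); last first.
  move=> _; case: ifP => [/eqP c'e | _ /andP[/eqP d_c' _]].
    by rewrite c'e !inE eqxx orbT in c'_out.
  by rewrite -d_c' inE eqxx in c'_out.
have [gc' collapse_c'] : g c' = [:: c'] /\ (if c' == e then d else c') = d.
  by move: c'_de; rewrite !inE => /orP[]/eqP->; split=> //; case: ifP => // /eqP.
rewrite gc' collapse_c' /= => /andP[-> pre_g] /andP[_ pre_k].
by apply: IHy pre_g pre_k => z zy; apply: y_de; rewrite inE zy orbT.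
Qed.

Lemma prefix_of_pair_filters x w :
  size x <= size w ->
  (forall d e, prefix [seq c <- x | c \in [:: d; e]] [seq c <- w | c \in [:: d; e]]) ->
  prefix x w.
Proof.
elim: x w => [|c x IHx] [|c' w] //= size_xw pre_xw.
have := pre_xw c c'; rewrite /= mem_head !inE eqxx orbT /= => /andP[/eqP c_c' _].
subst c'; rewrite eqxx /=; apply: IHx => // d e; have := pre_xw d e.
by rewrite /=; case: ifP => //= _; rewrite eqxx.
Qed.

End Words.

Section RCPPrefix.
Variables (S : eqType) (f : seq S -> seq S).
Hypothesis f_RCP : RCP1 f.

Lemma RCP_prefix_image phi u v : Defs.monoid_morphism phi -> phi u = phi v ->
  prefix v (f v) -> prefix (phi v) (phi (f u)).
Proof.
move=> phi_mm phi_uv /prefixP[z fv].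
by rewrite (f_RCP phi_mm phi_uv) fv (proj2 phi_mm) prefix_prefix.
Qed.

Lemma RCP_prefix_subst g a y : prefix [:: a] (f [:: a]) ->
  g a = y -> hom_of g y = y -> prefix y (hom_of g (f y)).
Proof.
move=> fa ga gy; have gay : hom_of g [:: a] = y by rewrite hom_of_cons ga cats0.
by rewrite -{1}gay; apply: RCP_prefix_image (hom_of_morphism g) _ fa; rewrite gy.
Qed.

End RCPPrefix.

Lemma exists_notin (T : finType) (s : seq T) : size s < #|T| -> exists a, a \notin s.
Proof.
move=> lt_sT; have /card_gt0P[a] : 0 < #|[predC s]|.
  by rewrite -(ltn_add2l #|s|) addn0 cardC (leq_ltn_trans (card_size s)).
by rewrite inE; exists a.
Qed.

Section ThreeLetters.
Variables (Sigma : finType) (f : seq Sigma -> seq Sigma).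
Hypotheses (card_Sigma : 3 <= #|Sigma|) (f_RCP : RCP1 f).
Hypothesis f_letter : forall a : Sigma, prefix [:: a] (f [:: a]).

Lemma fresh_letter (s : seq Sigma) : size s < 3 -> exists a, a \notin s.
Proof. by move=> lt_s3; apply: exists_notin (leq_trans lt_s3 card_Sigma). Qed.

Lemma RCP_prefix_nseq d n : prefix (nseq n d) (f (nseq n d)).
Proof.
have [a] := fresh_letter (isT : size [:: d] < 3); rewrite inE => a_d.
have [e] := fresh_letter (isT : size [:: d; a] < 3).
rewrite !inE negb_or => /andP[e_d e_a].
pose sub b c := if c == b then nseq n d else [:: c].
have sub_d b : b != d -> sub b d = [:: d] by rewrite /sub eq_sym => /negbTE->.
have pre_sub b : b != d -> prefix (nseq n d) (hom_of (sub b) (f (nseq n d))).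
  move=> b_d; apply: (RCP_prefix_subst f_RCP (f_letter b)); first by rewrite /sub eqxx.
  by apply: hom_of_id_in => c; rewrite mem_nseq => /andP[_ /eqP->]; apply: sub_d.
apply: (prefix_nseq_of_homs (sub_d a a_d) (sub_d e e_d) _ (pre_sub a a_d)
  (pre_sub e e_d)).
move=> c _; rewrite /sub; case: (eqVneq c a) => [-> | _]; last by left.
by right; rewrite eq_sym (negbTE e_a).
Qed.

Lemma RCP_prefix_pair d e (y : seq Sigma) : {subset y <= [:: d; e]} -> prefix y (f y).
Proof.
move=> y_de; have [a a_de] := fresh_letter (isT : size [:: d; e] < 3).
have a_ne c : c \in [:: d; e] -> (c == a) = false.
  by move=> c_de; apply: contraNF a_de => /eqP <-.
pose g c := if c == a then y else [:: c].
pose collapse := map (fun c => if c == e then d else c).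
have collapse_nseq s : {subset s <= [:: d; e]} -> collapse s = nseq (size s) d.
  elim: s => //= c s IHs s_de; rewrite IHs => [|z zs]; last first.
    by apply: s_de; rewrite inE zs orbT.
  have := s_de c (mem_head c s); rewrite !inE => /orP[]/eqP->; last by rewrite eqxx.
  by case: ifP.
have nseq_de : {subset nseq (size y) d <= [:: d; e]}.
  by move=> c; rewrite mem_nseq => /andP[_ /eqP->]; rewrite inE eqxx.
apply: (@prefix_of_hom_collapse _ d e g).
- by rewrite /g a_ne // inE eqxx.
- by rewrite /g a_ne // !inE eqxx orbT.
- exact: y_de.
- apply: (RCP_prefix_subst f_RCP (f_letter a)); first by rewrite /g eqxx.
  by apply: hom_of_id_in => c /y_de c_de; rewrite /g a_ne.
- have collapse_y : collapse y = collapse (nseq (size y) d).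
    by rewrite !collapse_nseq ?size_nseq.
  have := @RCP_prefix_image _ _ f_RCP collapse _ _ (map_morphism _) collapse_y
    (RCP_prefix_nseq d (size y)).
  by rewrite collapse_nseq // size_nseq.
Qed.

Lemma RCP_size_le x : size x <= size (f x).
Proof.
case: x => [// | c x]; pose const := map (fun _ : Sigma => c).
have const_nseq (s : seq Sigma) : const s = nseq (size s) c by elim: s => //= ? ? ->.
have const_x : const (c :: x) = const (nseq (size (c :: x)) c).
  by rewrite !const_nseq size_nseq.
have := @RCP_prefix_image _ _ f_RCP const _ _ (map_morphism _) const_x
  (RCP_prefix_nseq c _).
by move/size_prefix; rewrite !size_map size_nseq.
Qed.

Lemma RCP_prefix x : prefix x (f x).
Proof.
apply: prefix_of_pair_filters (RCP_size_le x) _ => d e.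
pose proj := filter (fun c => c \in [:: d; e]).
have proj_de : {subset proj x <= [:: d; e]} by move=> c; rewrite mem_filter => /andP[].
have proj_x : proj x = proj (proj x) by rewrite /proj filter_id.
have := @RCP_prefix_image _ _ f_RCP proj _ _ (filter_morphism _) proj_x
  (RCP_prefix_pair proj_de).
by rewrite -proj_x.
Qed.

End ThreeLetters.

Theorem mainTheorem9 (Sigma : finType) (f : seq Sigma -> seq Sigma) :
  3 <= #|Sigma| ->
  RCP1 f ->
  (forall a : Sigma, has_prefix [:: a] (f [:: a])) ->
  forall x : seq Sigma, has_prefix x (f x).
Proof.
move=> card_Sigma f_RCP f_letter x; apply/has_prefixP.
by apply: RCP_prefix => // a; apply/has_prefixP.
Qed.
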